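(* (Explicit Rayleigh's Shorting Law.) Let $\Gamma$ be a metrized graph and let $p,q,s,t\in\Gamma$ with $p\neq q$. Then $$r(s,t)=r_{\Gamma_{pq}}(s,t)+\frac{1}{r(p,q)}\big[j_p(q,s)-j_p(q,t)\big]^2 .$$ In particular $r(s,t)\ge r_{\Gamma_{pq}}(s,t)$, and equality holds if and only if $j_p(q,s)=j_p(q,t)$.
   Context: A metrized graph $\Gamma$ is a finite connected graph (multiple edges and self-loops allowed) in which each edge is identified with a closed line segment of positive length; any finite set of points may be declared vertices. $\Gamma$ is regarded as a resistive electric circuit in which each edge is a resistor whose resistance equals its length. For $x,y\in\Gamma$, $r(x,y)$ is the effective resistance between $x$ and $y$. For $x,y,z\in\Gamma$, $j_z(x,y)$ is the voltage at $x$ when a unit current enters the circuit at $y$ and exits at $z$, with reference voltage $0$ at $z$ (so $j_x(y,y)=r(x,y)$). For $p,q\in\Gamma$, $\Gamma_{pq}$ denotes the metrized graph obtained from $\Gamma$ by identifying the points $p$ and $q$; $r_{\Gamma_{pq}}$ and $j^{\Gamma_{pq}}$ denote the resistance and voltage functions on $\Gamma_{pq}$ (points of $\Gamma$ are regarded as points of $\Gamma_{pq}$ via the quotient map). *)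

(* A metrized graph is given by a model: a finite vertex
   type V and a list of edges (a, b, L) with length (= resistance) L > 0;
   multiple edges and self-loops are allowed. *)
From HB Require Import structures.
From mathcomp Require Import all_boot all_order all_algebra.
From Stdlib Require Import ClassicalEpsilon.
Set Implicit Arguments. Unset Strict Implicit. Unset Printing Implicit Defensive.
Import Order.TTheory GRing.Theory Num.Theory.
Local Open Scope ring_scope.

Section MetrizedGraph.
Variables (R : realFieldType) (V : finType).

Definition adj (E : seq (V * V * R)) : rel V :=
  fun u v => has (fun e => ((e.1.1 == u) && (e.1.2 == v)) ||
                           ((e.1.1 == v) && (e.1.2 == u))) E.

Definition metrized_graph (E : seq (V * V * R)) : Prop :=
  (forall e, List.In e E -> 0 < e.2) /\ (forall u v : V, connect (adj E) u v).

(* net current flowing out of vertex w into the edges, for potential v;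
   the current along edge (a,b,L) from a to b is (v a - v b) / L *)
Definition outflow (E : seq (V * V * R)) (v : V -> R) (w : V) : R :=
  \sum_(e <- E) (((e.1.1 == w)%:R - (e.1.2 == w)%:R) * (v e.1.1 - v e.1.2) / e.2).

(* v is the potential when a unit current enters at y and exits at z,
   with reference voltage 0 at z *)
Definition is_voltage (E : seq (V * V * R)) (z y : V) (v : V -> R) : Prop :=
  (forall w, outflow E v w = (w == y)%:R - (w == z)%:R) /\ v z = 0.

Definition voltage (E : seq (V * V * R)) (z y : V) : V -> R :=
  epsilon (inhabits (fun _ : V => 0 : R)) (is_voltage E z y).

(* j E z x y = j_z(x,y) : voltage at x, current in at y, out at z *)
Definition j (E : seq (V * V * R)) (z x y : V) : R := voltage E z y x.

Definition r (E : seq (V * V * R)) (x y : V) : R := j E x y y.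

(* Gamma_pq: identify q with p.  Vertex type of the quotient: V minus q. *)
Definition merge_pt (p q : V) (hpq : p != q) (w : V) : {x : V | x != q} :=
  insubd (exist (fun x => x != q) p hpq) w.

Definition merge_edges (p q : V) (hpq : p != q) (E : seq (V * V * R))
  : seq ({x : V | x != q} * {x : V | x != q} * R) :=
  map (fun e => (merge_pt hpq e.1.1, merge_pt hpq e.1.2, e.2)) E.

End MetrizedGraph.

(* Let f, g and h be the potentials driving a unit current from t to s in
   Gamma, from q to p in Gamma, and from t to s in Gamma_pq (pulled back to
   Gamma).  Then h satisfies Kirchhoff's law in Gamma except for an unknown
   current d leaving through q and re-entering through p, and h(p) = h(q).
   Reciprocity, i.e. the symmetry of the energy pairing
   sum_w u(w) * outflow(v)(w), applied to the pairs (h, g), (h, f) and (f, g)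
   gives d g(q) = g(s) - g(t), h(t) = f(t) + d (g(t) - g(s)) and
   f(q) - f(p) = g(t) - g(s).  Since f(t) = r(s,t), g(q) = r(p,q) and
   g = j_p(q, .), this is the shorting formula.  Potentials exist because
   grounding at one vertex makes the discrete Laplacian injective, hence
   invertible. *)

From HB Require Import structures.
From mathcomp Require Import all_boot all_order all_algebra.
From mathcomp Require Import ring lra.
From Stdlib Require Import ClassicalEpsilon.
Set Implicit Arguments. Unset Strict Implicit. Unset Printing Implicit Defensive.
Import Order.TTheory GRing.Theory Num.Theory.
Local Open Scope ring_scope.

Lemma mem_In (T : eqType) (x : T) (s : seq T) : x \in s -> List.In x s.
Proof. by elim: s => //= y s IHs; rewrite inE => /orP [/eqP ->|/IHs]; auto. Qed.

Definition dipole {R : pzRingType} {T : eqType} (a b w : T) : R :=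
  (w == a)%:R - (w == b)%:R.

Section Dipole.
Variables (R : pzRingType) (T : finType).

Lemma sum_mul_indicator (u : T -> R) a : \sum_w u w * (w == a)%:R = u a.
Proof.
by rewrite (bigD1 a) //= eqxx mulr1 big1 ?addr0 // => w /negbTE ->; rewrite mulr0.
Qed.

Lemma sum_mul_dipole (u : T -> R) (a b : T) :
  \sum_w u w * dipole a b w = u a - u b.
Proof. by under eq_bigr do rewrite mulrBr; rewrite sumrB !sum_mul_indicator. Qed.

Lemma sum_dipole (a b : T) : \sum_w dipole a b w = 0 :> R.
Proof.
rewrite -[RHS](subrr (1 : R)) -(sum_mul_dipole (fun=> 1) a b).
by apply: eq_bigr => w _; rewrite mul1r.
Qed.

Lemma sum_fiber_indicator (T' : finType) (phi : T -> T') a W :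
  \sum_(x | phi x == W) (x == a)%:R = (phi a == W)%:R :> R.
Proof.
case: (eqVneq (phi a) W) => [<- | aW].
  by rewrite (bigD1 a) //= eqxx big1 ?addr0 // => x /andP [_ /negbTE ->].
rewrite big1 // => x /eqP xW; suff /negbTE -> : x != a by [].
by apply: contraNneq aW => xa; rewrite -xa xW.
Qed.

Lemma sum_fiber_dipole (T' : finType) (phi : T -> T') a b W :
  \sum_(x | phi x == W) dipole a b x = dipole (phi a) (phi b) W :> R.
Proof. by rewrite sumrB !sum_fiber_indicator /dipole !(eq_sym W). Qed.

End Dipole.

Section Outflow.
Variables (R : realFieldType) (V : finType) (E : seq (V * V * R)).
Implicit Types (u v : V -> R).

Lemma outflowE v w :
  outflow E v w
  = \sum_(e <- E) dipole e.1.1 e.1.2 w * ((v e.1.1 - v e.1.2) / e.2).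
Proof. by apply: eq_bigr => e _; rewrite /dipole !(eq_sym w) mulrA. Qed.

Lemma sum_outflow v : \sum_w outflow E v w = 0.
Proof.
under eq_bigr do rewrite outflowE.
by rewrite exchange_big big1 // => e _; rewrite -mulr_suml sum_dipole mul0r.
Qed.

Definition energy u v : R :=
  \sum_(e <- E) (u e.1.1 - u e.1.2) * (v e.1.1 - v e.1.2) / e.2.

Lemma sum_mul_outflow u v : \sum_w u w * outflow E v w = energy u v.
Proof.
under eq_bigr do rewrite outflowE mulr_sumr.
rewrite exchange_big; apply: eq_bigr => e _ /=.
by under eq_bigr do rewrite mulrA; rewrite -mulr_suml sum_mul_dipole mulrA.
Qed.

Lemma energyC u v : energy u v = energy v u.
Proof. by apply: eq_bigr => e _; rewrite (mulrC (u _ - _)). Qed.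

Lemma sum_mul_outflowC u v :
  \sum_w u w * outflow E v w = \sum_w v w * outflow E u w.
Proof. by rewrite !sum_mul_outflow energyC. Qed.

Lemma outflow_linear a u v w :
  outflow E (fun x => a * u x + v x) w = a * outflow E u w + outflow E v w.
Proof. by rewrite /outflow mulr_sumr -big_split; apply: eq_bigr => e _ /=; ring. Qed.

Definition grounded_outflow (z : V) (u : {ffun V -> R^o}) : {ffun V -> R^o} :=
  [ffun w => outflow E u w + (w == z)%:R * u z].

Lemma grounded_outflow_linear z : linear (grounded_outflow z).
Proof.
move=> a u v; apply/ffunP => w; rewrite !ffunE.
have -> : outflow E (a *: u + v) w = outflow E (fun x => a * u x + v x) w.
  by apply: eq_bigr => e _; rewrite !ffunE.
rewrite outflow_linear /GRing.scale /=; ring.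
Qed.

HB.instance Definition _ z := GRing.isLinear.Build R {ffun V -> R^o} {ffun V -> R^o}
  *:%R (grounded_outflow z) (grounded_outflow_linear z).

Lemma ground_value z (u b : V -> R) c :
  (forall w, outflow E u w + (w == z)%:R * c = b w) -> c = \sum_w b w.
Proof.
move=> ub; under [RHS]eq_bigr do rewrite -ub.
rewrite big_split /= sum_outflow add0r.
by under eq_bigr do rewrite mulrC; rewrite sum_mul_indicator.
Qed.

Hypothesis hE : metrized_graph E.

Lemma edge_energy_ge0 v e :
  e \in E -> 0 <= (v e.1.1 - v e.1.2) * (v e.1.1 - v e.1.2) / e.2.
Proof.
move=> /mem_In /(proj1 hE) e2_gt0.
by apply: divr_ge0; [rewrite -expr2 sqr_ge0 | exact: ltW].
Qed.

Lemma energy_ge0 v : 0 <= energy v v.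
Proof. by rewrite /energy big_seq; apply: sumr_ge0 => e; apply: edge_energy_ge0. Qed.

Lemma energy_eq0 v : energy v v = 0 -> forall x y, v x = v y.
Proof.
move=> /eqP; rewrite /energy big_seq_cond psumr_eq0 => [/allP Ev0|e /andP [eE _]];
  last exact: edge_energy_ge0.
have vE e : e \in E -> v e.1.1 = v e.1.2.
  move=> eE; move: (Ev0 e eE); rewrite eE /= mulf_eq0 invr_eq0.
  by rewrite (gt_eqF ((proj1 hE) e (mem_In eE))) orbF mulf_eq0 orbb subr_eq0 => /eqP.
move=> x y; have vclosed : closed (adj E) [pred z | v z == v x].
  by move=> a b /hasP [e eE /orP [] /andP [/eqP <- /eqP <-]]; rewrite !inE (vE e eE).
by have := closed_connect vclosed (proj2 hE x y); rewrite !inE eqxx => /esym/eqP.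
Qed.

Lemma harmonic_const v : (forall w, outflow E v w = 0) -> forall x y, v x = v y.
Proof.
move=> v0; apply: energy_eq0.
by rewrite -sum_mul_outflow big1 // => w _; rewrite v0 mulr0.
Qed.

Lemma voltage_exists z y : exists v, is_voltage E z y v.
Proof.
pose T := linfun (grounded_outflow z).
have kerT : lker T == 0%VS.
  apply/lker0P/raddf_inj => u; rewrite /= lfunE => /ffunP Tu0.
  have u0 w : outflow E u w + (w == z)%:R * u z = 0 by have := Tu0 w; rewrite !ffunE.
  have uz0 : u z = 0 by rewrite (ground_value u0) big1.
  apply/ffunP => x; rewrite ffunE -uz0; apply: harmonic_const => w.
  by have := u0 w; rewrite uz0 mulr0 addr0.
pose b : {ffun V -> R^o} := [ffun w => dipole y z w].
set u := (T^-1)%VF b.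
have ub w : outflow E u w + (w == z)%:R * u z = dipole y z w.
  have := congr1 (fun f : {ffun V -> R^o} => f w) (lker0_lfunVK kerT b).
  by rewrite lfunE !ffunE.
have uz0 : u z = 0 by rewrite (ground_value ub) sum_dipole.
by exists u; split => // w; rewrite -[RHS]/(dipole y z w) -ub uz0 mulr0 addr0.
Qed.

Lemma outflow_voltage z y w : outflow E (voltage E z y) w = dipole y z w.
Proof. exact: (proj1 (epsilon_spec _ _ (voltage_exists z y))). Qed.

Lemma voltage_ground z y : voltage E z y z = 0.
Proof. exact: (proj2 (epsilon_spec _ _ (voltage_exists z y))). Qed.

Lemma sum_mul_outflow_voltage u z y :
  \sum_w u w * outflow E (voltage E z y) w = u y - u z.
Proof. by under eq_bigr do rewrite outflow_voltage; rewrite sum_mul_dipole. Qed.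

Lemma jC z x y : j E z x y = j E z y x.
Proof.
have := sum_mul_outflow_voltage (voltage E z x) z y.
by rewrite /j sum_mul_outflowC !sum_mul_outflow_voltage !voltage_ground !subr0 => ->.
Qed.

Lemma r_gt0 p q : p != q -> 0 < r E p q.
Proof.
move=> pq; have rE : r E p q = energy (voltage E p q) (voltage E p q).
  by rewrite -sum_mul_outflow sum_mul_outflow_voltage voltage_ground subr0.
rewrite rE lt_def energy_ge0 andbT; apply/eqP => /energy_eq0 g_const.
have := outflow_voltage p q q; rewrite /outflow big1 => [|e _]; last first.
  by rewrite (g_const e.1.1 e.1.2) subrr mulr0 mul0r.
by rewrite /dipole eqxx eq_sym (negbTE pq) subr0 => /eqP; rewrite eq_sym oner_eq0.
Qed.

Lemma shorted_potential p q s t (h : V -> R) d : p != q ->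
  (forall w, outflow E h w = dipole t s w + d * dipole q p w) ->
  h s = 0 -> h p = h q ->
  h t = r E s t - (j E p q s - j E p q t) ^+ 2 / r E p q.
Proof.
move=> pq hd hs hpq; set f := voltage E s t; set g := voltage E p q.
have gq0 : g q != 0 := lt0r_neq0 (r_gt0 pq).
have [f0 g0] : f s = 0 /\ g p = 0 by split; apply: voltage_ground.
have sum_h u : \sum_w u w * outflow E h w = u t - u s + d * (u q - u p).
  under eq_bigr do rewrite hd mulrDr mulrCA.
  by rewrite big_split -mulr_sumr !sum_mul_dipole.
have hq : h q - h p = g t - g s + d * g q.
  by rewrite -(sum_mul_outflow_voltage h) sum_mul_outflowC sum_h -/g g0 subr0.
have ht : h t - h s = f t - f s + d * (f q - f p).
  by rewrite -(sum_mul_outflow_voltage h) sum_mul_outflowC sum_h -/f.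
have fqp : f q - f p = g t - g s.
  by rewrite -(sum_mul_outflow_voltage f) sum_mul_outflowC sum_mul_outflow_voltage.
rewrite !(jC p q) /r /j -/f -/g.
move: hq ht; rewrite hs hpq subrr fqp f0 !subr0 => hq ->.
have -> : d = (g s - g t) / g q.
  by apply: (mulIf gq0); rewrite mulfVK //; lra.
by clearbody f g; field.
Qed.

End Outflow.

Section MapEdges.
Variables (R : realFieldType) (V V' : finType) (phi : V -> V').

(* [merge_edges hpq E] is [map_edges (merge_pt hpq) E] by definition. *)
Definition map_edges (E : seq (V * V * R)) : seq (V' * V' * R) :=
  map (fun e => (phi e.1.1, phi e.1.2, e.2)) E.

Lemma outflow_map E (h' : V' -> R) W :
  outflow (map_edges E) h' W = \sum_(x | phi x == W) outflow E (h' \o phi) x.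
Proof.
rewrite outflowE big_map; under [RHS]eq_bigr do rewrite outflowE.
rewrite exchange_big; apply: eq_bigr => e _ /=.
by rewrite -mulr_suml sum_fiber_dipole.
Qed.

Lemma sum_fiber_outflow_voltage E (h' : V' -> R) s t W :
  is_voltage (map_edges E) (phi s) (phi t) h' ->
  \sum_(x | phi x == W) (outflow E (h' \o phi) x - dipole t s x) = 0.
Proof. by case=> h'V _; rewrite sumrB -outflow_map h'V sum_fiber_dipole subrr. Qed.

Lemma map_edges_graph (psi : V' -> V) E :
  cancel psi phi -> metrized_graph E -> metrized_graph (map_edges E).
Proof.
move=> psiK [Epos Econn]; split.
  by move=> e' /List.in_map_iff [e [<- eE]]; apply: Epos.
have adj_map a b : adj E a b -> adj (map_edges E) (phi a) (phi b).
  rewrite /adj has_map; apply: sub_has => e /=.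
  by case/orP => /andP [/eqP -> /eqP ->]; rewrite !eqxx ?orbT.
move=> u v; rewrite -(psiK u) -(psiK v).
case/connectP: (Econn (psi u) (psi v)) => pth + ->.
elim: pth (psi u) => //= b pth IH a.
by case/andP => /adj_map ab /IH; apply: connect_trans; apply: connect1.
Qed.

End MapEdges.

Section Merge.
Variables (R : realFieldType) (V : finType) (p q : V) (hpq : p != q).
Local Notation mg := (merge_pt hpq).

Lemma val_merge_pt a : val (mg a) = if a == q then p else a.
Proof. by rewrite /merge_pt val_insubd; case: (a == q). Qed.

Lemma merge_ptK : cancel val mg.
Proof. by move=> x; apply: val_inj; rewrite val_merge_pt (negbTE (valP x)). Qed.

Lemma merge_pt_q : mg q = mg p.
Proof. by apply: val_inj; rewrite !val_merge_pt eqxx (negbTE hpq). Qed.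

Lemma sum_fiber_merge (c : V -> R) W :
  \sum_(x | mg x == W) c x = c (val W) + (val W == p)%:R * c q.
Proof.
rewrite (bigD1 (val W)) ?merge_ptK //; congr (_ + _).
case: (eqVneq (val W) p) => [Wp | Wnp].
  rewrite (bigD1 q); last by rewrite -val_eqE val_merge_pt eqxx Wp eqxx eq_sym.
  rewrite mulr1n mul1r big1 => [|x /andP [/andP [/eqP <- xmg] xq]].
    exact: addr0.
  by rewrite val_merge_pt (negbTE xq) eqxx in xmg.
rewrite mul0r big1 // => x /andP [/eqP Wx]; rewrite -Wx val_merge_pt in Wnp *.
by case: (x == q) Wnp; rewrite eqxx.
Qed.

Lemma outflow_shorted_voltage E s t (h' : {x : V | x != q} -> R) :
  is_voltage (merge_edges hpq E) (mg s) (mg t) h' ->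
  exists d, forall w, outflow E (h' \o mg) w = dipole t s w + d * dipole q p w.
Proof.
move=> h'V; pose c x := outflow E (h' \o mg) x - dipole t s x.
have c_fiber W : \sum_(x | mg x == W) c x = 0 := sum_fiber_outflow_voltage W h'V.
exists (c q) => w; suff cw : c w = c q * dipole q p w by rewrite -cw addrC subrK.
have := c_fiber (mg w); rewrite sum_fiber_merge val_merge_pt.
case: (eqVneq w q) => [-> _ | wq].
  by rewrite /dipole eqxx eq_sym (negbTE hpq) subr0 mulr1.
by rewrite /dipole (negbTE wq) sub0r mulrN => /eqP; rewrite addr_eq0 mulrC => /eqP.
Qed.

End Merge.

Theorem theorem2p3 (R : realFieldType) (V : finType) (E : seq (V * V * R))
  (hE : metrized_graph E) (p q s t : V) (hpq : p != q) :
  r E s t = r (merge_edges hpq E) (merge_pt hpq s) (merge_pt hpq t)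
            + (j E p q s - j E p q t) ^+ 2 / r E p q
  /\ r (merge_edges hpq E) (merge_pt hpq s) (merge_pt hpq t) <= r E s t
  /\ (r E s t = r (merge_edges hpq E) (merge_pt hpq s) (merge_pt hpq t)
      <-> j E p q s = j E p q t).
Proof.
set r' := r (merge_edges hpq E) (merge_pt hpq s) (merge_pt hpq t).
set x := (j E p q s - j E p q t) ^+ 2 / r E p q.
have hE' : metrized_graph (merge_edges hpq E) := map_edges_graph (merge_ptK hpq) hE.
set h' := voltage (merge_edges hpq E) (merge_pt hpq s) (merge_pt hpq t).
have h'V : is_voltage (merge_edges hpq E) (merge_pt hpq s) (merge_pt hpq t) h'.
  by split; [apply: outflow_voltage | apply: voltage_ground].
have [d hd] := outflow_shorted_voltage h'V.
have shorting : r' = r E s t - x :=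
  shorted_potential hE hpq hd (proj2 h'V) (esym (congr1 h' (merge_pt_q hpq))).
have x_ge0 : 0 <= x by rewrite divr_ge0 ?sqr_ge0 // ltW // r_gt0.
have -> : r E s t = r' + x by rewrite shorting subrK.
split => //; split; first by rewrite lerDl.
have x0 : x = 0 <-> j E p q s = j E p q t.
  rewrite /x; split => [/eqP | ->]; last by rewrite subrr expr0n mul0r.
  rewrite mulf_eq0 invr_eq0 (gt_eqF (r_gt0 hE hpq)) orbF sqrf_eq0 subr_eq0.
  by move/eqP.
split => [/(canRL (addKr r')) | /x0 ->]; last by rewrite addr0.
by rewrite addNr => /x0.
Qed.
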